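(* Let $\sigma>0$ and let $X$ be lognormal$(0,\sigma^2)$, i.e. $X=e^{Y}$ with $Y\sim\mathrm{N}(0,\sigma^2)$, with density $f(x)=\frac{1}{x\sigma\sqrt{2\pi}}e^{-(\log x)^2/(2\sigma^2)}$, $x>0$. For $\theta>0$ let $\mathcal{L}(\theta)=\mathbb{E}[e^{-\theta X}]$, $\kappa(\theta)=\log\mathcal{L}(\theta)$, and let $F_\theta$ be the probability distribution on $(0,\infty)$ with density $f_\theta(x)=e^{-\theta x-\kappa(\theta)}f(x)$; write $\mathbb{E}_\theta$ and $\mathrm{Var}_\theta$ for the expectation and variance of $X$ when $X\sim F_\theta$. Define $$\mu_\theta=-\mathcal{W}(\theta\sigma^2),\qquad \sigma_\theta^2=\frac{\sigma^2}{1+\mathcal{W}(\theta\sigma^2)},$$ where $\mathcal{W}$ is the Lambert W function. Then $$\lim_{\theta\to\infty}\frac{\mathbb{E}_\theta[X]}{\exp\{\mu_\theta+\sigma_\theta^2/2\}}=1,\qquad \lim_{\theta\to\infty}\frac{\mathrm{Var}_\theta[X]}{\exp\{2\mu_\theta+\sigma_\theta^2\}\,\bigl(e^{\sigma_\theta^2}-1\bigr)}=1.$$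
   Context: The Lambert W function $\mathcal{W}(a)$ for $a>0$ is the unique (positive) solution $w$ of $we^{w}=a$. $F_\theta$ is the exponentially tilted (Esscher transformed) lognormal distribution. *)

From Stdlib Require Import Reals ClassicalEpsilon.
From Coquelicot Require Import Coquelicot.
Open Scope R_scope.

Definition LambertW (a : R) : R :=
  epsilon (inhabits 0) (fun w => 0 < w /\ w * exp w = a).

Definition lognormal_pdf (sigma x : R) : R :=
  / (x * sigma * sqrt (2 * PI)) * exp (- (ln x) ^ 2 / (2 * sigma ^ 2)).

Definition int0inf (g : R -> R) : R :=
  RInt_gen g (at_right 0) (Rbar_locally p_infty).

Definition laplace (sigma theta : R) : R :=
  int0inf (fun x => exp (- theta * x) * lognormal_pdf sigma x).
Definition kappa (sigma theta : R) : R := ln (laplace sigma theta).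

Definition tilted_pdf (sigma theta x : R) : R :=
  exp (- theta * x - kappa sigma theta) * lognormal_pdf sigma x.

Definition tilted_mean (sigma theta : R) : R :=
  int0inf (fun x => x * tilted_pdf sigma theta x).
Definition tilted_var (sigma theta : R) : R :=
  int0inf (fun x => (x - tilted_mean sigma theta) ^ 2 * tilted_pdf sigma theta x).

Definition mu_theta (sigma theta : R) : R := - LambertW (theta * sigma ^ 2).
Definition sigma2_theta (sigma theta : R) : R :=
  sigma ^ 2 / (1 + LambertW (theta * sigma ^ 2)).

From Stdlib Require Import Reals Lra Psatz ClassicalEpsilon.
From Coquelicot Require Import Coquelicot.
Open Scope R_scope.

(* Let w = W(theta sigma^2), t = 1 + w, and substitute x = exp (v / sqrt t - w).  Since
   w e^w = theta sigma^2, the tilted density becomes, up to a constant factor, the kernel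
   G_t(v) = exp (- phi_t(v) / sigma^2), phi_t(v) = (t - 1)(e^u - 1 - u) + u^2/2 with u = v / sqrt t.
   Hence E_theta X = e^{-w} A1/A0 and Var_theta X = e^{-2w} (A2/A0 - (A1/A0)^2), where
   A_k = int e^{k u} G_t(v) dv.  For large t the kernels are dominated by a fixed multiple of
   e^{-3|v|} and bounded below on [-1, 1], so all the moments involved are O(1).  Integrating
   the derivatives of G_t and of e^u G_t over the line gives the Stein-type identities
   (t - 1)(A1 - A0) = - int u G_t and sigma^2 A1 = (t - 1)(A2 - A1) + int u e^u G_t, whence
   A1/A0 = 1 + O(t^{-3/2}) and A2/A0 - (A1/A0)^2 = sigma^2/t (1 + o(1)).  As sigma_theta^2 =
   sigma^2/t and t -> oo with theta, both ratios tend to 1. *)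

Lemma continuous_of_ex_derive (f : R -> R) x : ex_derive f x -> continuous f x.
Proof. exact (@ex_derive_continuous R_AbsRing R_NormedModule f x). Qed.

Lemma continuity_pt_of_ex_derive (f : R -> R) x : ex_derive f x -> continuity_pt f x.
Proof. intros H. apply continuity_pt_filterlim, continuous_of_ex_derive, H. Qed.

Lemma exp_le_compat a b : a <= b -> exp a <= exp b.
Proof.
  intros H. destruct (Req_dec a b) as [->|E]; [lra|left; apply exp_increasing; lra].
Qed.

Lemma le_exp_self x : x <= exp x.
Proof. pose proof (exp_ineq1_le x). lra. Qed.

Lemma exp_mult_two x : exp (2 * x) = exp x * exp x.
Proof. rewrite <- exp_plus. f_equal. ring. Qed.

Lemma exp_remainder2_sign x : 0 <= x * (exp x - 1 - x - x ^ 2 / 2).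
Proof.
  destruct (MVT_gen (fun y => exp y - 1 - y - y ^ 2 / 2) 0 x (fun y => exp y - 1 - y))
    as [c [Hc E]].
  - intros y _. auto_derive; auto. field.
  - intros y _. apply continuity_pt_of_ex_derive. auto_derive; auto.
  - simpl in E. rewrite exp_0 in E. pose proof (exp_ineq1_le c).
    unfold Rmin, Rmax in Hc. destruct (Rle_dec 0 x).
    + assert (0 <= (exp c - 1 - c) * x) by (apply Rmult_le_pos; lra). nra.
    + assert (0 <= (exp c - 1 - c) * (- x)) by (apply Rmult_le_pos; lra). nra.
Qed.

Lemma exp_ge_taylor3 x : 1 + x + x ^ 2 / 2 + x ^ 3 / 6 <= exp x.
Proof.
  destruct (MVT_gen (fun y => exp y - 1 - y - y ^ 2 / 2 - y ^ 3 / 6) 0 x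
              (fun y => exp y - 1 - y - y ^ 2 / 2)) as [c [Hc E]].
  - intros y _. auto_derive; auto. field.
  - intros y _. apply continuity_pt_of_ex_derive. auto_derive; auto.
  - simpl in E. rewrite exp_0 in E. pose proof (exp_remainder2_sign c).
    unfold Rmin, Rmax in Hc.
    destruct (Req_dec c 0) as [->|Hc0]; [rewrite exp_0 in E; nra|].
    destruct (Rle_dec 0 x).
    + assert (0 <= exp c - 1 - c - c ^ 2 / 2)
        by (destruct (Rle_lt_dec (exp c - 1 - c - c ^ 2 / 2) 0); [nra|lra]).
      nra.
    + assert (exp c - 1 - c - c ^ 2 / 2 <= 0)
        by (destruct (Rle_lt_dec (exp c - 1 - c - c ^ 2 / 2) 0); [lra|nra]).
      nra.
Qed.

Lemma exp_remainder_ge_sqr u : -2 <= u -> u ^ 2 / 6 <= exp u - 1 - u.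
Proof. intros H. pose proof (exp_ge_taylor3 u). nra. Qed.

Lemma exp_remainder_ge_lin u : u <= -2 -> - u / 2 <= exp u - 1 - u.
Proof. intros H. pose proof (exp_pos u). lra. Qed.

Lemma exp_remainder_le_sqr u : -1 <= u <= 1 -> exp u - 1 - u <= 2 * u ^ 2.
Proof.
  intros H. pose proof (exp_ge_taylor3 (- u)). pose proof (exp_pos u).
  assert (Hinv : exp u * exp (- u) = 1)
    by (rewrite <- exp_plus, Rplus_opp_r; apply exp_0).
  destruct (Rle_dec 0 u).
  - assert (exp (- u) >= 1 - u + u ^ 2 / 3) by nra.
    assert (exp u * (1 - u + u ^ 2 / 3) <= 1) by nra.
    assert ((1 + u + 2 * u ^ 2) * (1 - u + u ^ 2 / 3) >= 1) by nra.
    nra.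
  - assert (exp (- u) >= 1 - u + u ^ 2 / 2) by nra.
    assert (exp u * (1 - u + u ^ 2 / 2) <= 1) by nra.
    assert ((1 + u + 2 * u ^ 2) * (1 - u + u ^ 2 / 2) >= 1) by nra.
    nra.
Qed.

(** * Integrals over the line of exponentially dominated functions *)

Local Notation Fm := (Rbar_locally m_infty).
Local Notation Fp := (Rbar_locally p_infty).

Lemma filter_prod_true (Fa Fb : (R -> Prop) -> Prop) {FFa : Filter Fa} {FFb : Filter Fb}
  (P : R * R -> Prop) : (forall a b, P (a, b)) -> filter_prod Fa Fb P.
Proof.
  intros H. apply (Filter_prod _ _ _ (fun _ => True) (fun _ => True));
    [apply filter_true|apply filter_true|intros; apply H].
Qed.

Lemma is_RInt_gen_ext_everywhere (Fa Fb : (R -> Prop) -> Prop) {FFa : Filter Fa}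
  {FFb : Filter Fb} (f g : R -> R) l :
  (forall x, f x = g x) -> is_RInt_gen f Fa Fb l -> is_RInt_gen g Fa Fb l.
Proof.
  intros E. apply (is_RInt_gen_ext f g).
  apply filter_prod_true; try typeclasses eauto. intros; apply E.
Qed.

Lemma is_RInt_gen_of_lim (f : R -> R) Fa Fb {FFa : Filter Fa} {FFb : Filter Fb} l :
  filter_prod Fa Fb (fun ab => ex_RInt f (fst ab) (snd ab)) ->
  filterlim (fun ab => RInt f (fst ab) (snd ab)) (filter_prod Fa Fb) (locally l) ->
  is_RInt_gen f Fa Fb l.
Proof.
  intros He Hl P HP. unfold filtermapi. specialize (Hl P HP). unfold filtermap in Hl.
  generalize (filter_and _ _ He Hl). apply filter_imp.
  intros ab [H1 H2]. exists (RInt f (fst ab) (snd ab)). split; auto.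
  exact (@RInt_correct R_CompleteNormedModule f _ _ H1).
Qed.

Lemma RInt_gen_eq_of_is_RInt_gen (f : R -> R) Fa Fb {FFa : ProperFilter' Fa}
  {FFb : ProperFilter' Fb} l :
  is_RInt_gen f Fa Fb l -> RInt_gen f Fa Fb = l.
Proof. intros H. apply (@is_RInt_gen_unique R_CompleteNormedModule); auto. Qed.

Lemma is_RInt_gen_unique_R (f : R -> R) Fa Fb {FFa : ProperFilter' Fa}
  {FFb : ProperFilter' Fb} l1 l2 :
  is_RInt_gen f Fa Fb l1 -> is_RInt_gen f Fa Fb l2 -> l1 = l2.
Proof.
  intros H1 H2.
  rewrite <- (@RInt_gen_eq_of_is_RInt_gen f Fa Fb FFa FFb l1 H1).
  exact (@RInt_gen_eq_of_is_RInt_gen f Fa Fb FFa FFb l2 H2).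
Qed.

Lemma exp_opp_le_of_opp_ln_le (eps N : R) :
  0 < eps -> - ln eps <= N -> exp (- N) <= eps.
Proof.
  intros He HN. rewrite <- (exp_ln eps) by exact He. apply exp_le_compat. lra.
Qed.

Definition exp_dominated (K : R) (f : R -> R) : Prop :=
  forall z, Rabs (f z) <= K * exp (- Rabs z).

Section ExpDominated.

Variables (f : R -> R) (K : R).
Hypothesis f_cont : forall z, continuous f z.
Hypothesis f_dom : exp_dominated K f.

Lemma exp_dominated_const_nonneg : 0 <= K.
Proof.
  pose proof (f_dom 0). pose proof (Rabs_pos (f 0)). pose proof (exp_pos (- Rabs 0)). nra.
Qed.

Lemma ex_RInt_of_continuous a b : ex_RInt f a b.
Proof. apply (@ex_RInt_continuous R_CompleteNormedModule). intros; apply f_cont. Qed.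

Lemma RInt_right_tail_le N x y : 0 <= N -> N <= x -> x <= y ->
  Rabs (RInt f x y) <= K * exp (- N).
Proof.
  intros HN Hx Hxy. pose proof exp_dominated_const_nonneg.
  assert (Hg : is_RInt (fun v => K * exp (- v)) x y (K * exp (- x) - K * exp (- y))).
  { replace (K * exp (- x) - K * exp (- y))
      with (minus ((fun v => - K * exp (- v)) y) ((fun v => - K * exp (- v)) x))
      by (unfold minus, plus, opp; simpl; ring).
    apply (is_RInt_derive (fun v => - K * exp (- v))).
    - intros z _. auto_derive; auto. ring.
    - intros z _. apply continuous_of_ex_derive. auto_derive; auto. }
  apply Rle_trans with (K * exp (- x) - K * exp (- y)).
  - apply (norm_RInt_le f (fun v => K * exp (- v)) x y _ _ Hxy); [| |exact Hg].
    + intros z Hz. rewrite <- (Rabs_right z) at 2 by lra. apply f_dom.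
    + apply (@RInt_correct R_CompleteNormedModule), ex_RInt_of_continuous.
  - pose proof (exp_pos (- y)).
    assert (exp (- x) <= exp (- N)) by (apply exp_le_compat; lra). nra.
Qed.

Lemma RInt_left_tail_le N x y : 0 <= N -> x <= y -> y <= - N ->
  Rabs (RInt f x y) <= K * exp (- N).
Proof.
  intros HN Hxy Hy. pose proof exp_dominated_const_nonneg.
  assert (Hg : is_RInt (fun v => K * exp v) x y (K * exp y - K * exp x)).
  { replace (K * exp y - K * exp x)
      with (minus ((fun v => K * exp v) y) ((fun v => K * exp v) x))
      by (unfold minus, plus, opp; simpl; ring).
    apply (is_RInt_derive (fun v => K * exp v)).
    - intros z _. auto_derive; auto. ring.
    - intros z _. apply continuous_of_ex_derive. auto_derive; auto. }
  apply Rle_trans with (K * exp y - K * exp x).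
  - apply (norm_RInt_le f (fun v => K * exp v) x y _ _ Hxy); [| |exact Hg].
    + intros z Hz. replace z with (- Rabs z) at 2 by (rewrite Rabs_left1 by lra; ring).
      apply f_dom.
    + apply (@RInt_correct R_CompleteNormedModule), ex_RInt_of_continuous.
  - pose proof (exp_pos x).
    assert (exp y <= exp (- N)) by (apply exp_le_compat; lra). nra.
Qed.

Lemma RInt_tail_le N x y : 0 <= N -> (N <= x /\ N <= y) \/ (x <= - N /\ y <= - N) ->
  Rabs (RInt f x y) <= K * exp (- N).
Proof.
  intros HN Hxy.
  destruct (Rle_dec x y) as [Hle|Hgt].
  - destruct Hxy; [apply RInt_right_tail_le|apply RInt_left_tail_le]; lra.
  - rewrite <- opp_RInt_swap by apply ex_RInt_of_continuous.
    change (Rabs (- RInt f y x) <= K * exp (- N)). rewrite Rabs_Ropp.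
    destruct Hxy; [apply RInt_right_tail_le|apply RInt_left_tail_le]; lra.
Qed.

Lemma ex_RInt_gen_exp_dominated : ex_RInt_gen f Fm Fp.
Proof.
  pose proof exp_dominated_const_nonneg as HK.
  destruct (proj1 (@filterlim_locally_cauchy (R * R) R_CompleteSpace (filter_prod Fm Fp) _
            (fun ab => RInt f (fst ab) (snd ab)))) as [l Hl].
  - intros eps. pose proof (cond_pos eps).
    set (N := Rmax 0 (- ln (eps / (2 * K + 2)))).
    assert (HN0 : 0 <= N) by apply Rmax_l.
    assert (HeN : exp (- N) <= eps / (2 * K + 2)).
    { apply exp_opp_le_of_opp_ln_le; [apply Rdiv_lt_0_compat; lra|apply Rmax_r]. }
    assert (K * exp (- N) < eps / 2).
    { apply Rle_lt_trans with (K * (eps / (2 * K + 2))); [apply Rmult_le_compat_l; auto|].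
      apply Rmult_lt_reg_r with (2 * K + 2); [lra|]. field_simplify; [nra|lra]. }
    exists (fun ab => fst ab < - N /\ N < snd ab). split.
    + apply (Filter_prod _ _ _ (fun a => a < - N) (fun b => N < b));
        [exists (- N); auto|exists N; auto|simpl; auto].
    + intros [a b] [a' b'] [Ha Hb] [Ha' Hb']. simpl in *.
      change (Rabs (RInt f a' b' - RInt f a b) < eps).
      replace (RInt f a' b' - RInt f a b) with (RInt f a' a + RInt f b b').
      2:{ rewrite <- (RInt_Chasles f a' a b'), <- (RInt_Chasles f a b b')
            by apply ex_RInt_of_continuous.
          unfold plus; simpl. ring. }
      eapply Rle_lt_trans; [apply Rabs_triang|].
      pose proof (RInt_tail_le N a' a HN0 ltac:(lra)).
      pose proof (RInt_tail_le N b b' HN0 ltac:(lra)). lra.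
  - exists l. apply (is_RInt_gen_of_lim f Fm Fp); [|exact Hl].
    apply filter_prod_true; try typeclasses eauto. intros; apply ex_RInt_of_continuous.
Qed.

Lemma is_RInt_gen_exp_dominated : is_RInt_gen f Fm Fp (RInt_gen f Fm Fp).
Proof.
  apply (@RInt_gen_correct R_CompleteNormedModule); try typeclasses eauto.
  apply ex_RInt_gen_exp_dominated.
Qed.

Lemma exp_dominated_lim : filterlim f Fm (locally 0) /\ filterlim f Fp (locally 0).
Proof.
  pose proof exp_dominated_const_nonneg as HK.
  assert (Hsmall : forall eps : posreal, exists M, 0 <= M /\ K * exp (- M) < eps).
  { intros eps. pose proof (cond_pos eps).
    exists (Rmax 0 (- ln (eps / (K + 1)))). split; [apply Rmax_l|].
    assert (exp (- Rmax 0 (- ln (eps / (K + 1)))) <= eps / (K + 1))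
      by (apply exp_opp_le_of_opp_ln_le; [apply Rdiv_lt_0_compat; lra|apply Rmax_r]).
    apply Rle_lt_trans with (K * (eps / (K + 1))); [apply Rmult_le_compat_l; auto|].
    apply Rmult_lt_reg_r with (K + 1); [lra|]. field_simplify; [nra|lra]. }
  split; intros P [eps HP]; destruct (Hsmall eps) as [M [HM0 HM]].
  - exists (- M). intros x Hx. apply HP. change (Rabs (f x - 0) < eps).
    rewrite Rminus_0_r. eapply Rle_lt_trans; [apply f_dom|].
    eapply Rle_lt_trans; [|apply HM]. apply Rmult_le_compat_l; auto.
    apply exp_le_compat. rewrite Rabs_left by lra. lra.
  - exists M. intros x Hx. apply HP. change (Rabs (f x - 0) < eps).
    rewrite Rminus_0_r. eapply Rle_lt_trans; [apply f_dom|].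
    eapply Rle_lt_trans; [|apply HM]. apply Rmult_le_compat_l; auto.
    apply exp_le_compat. rewrite Rabs_right by lra. lra.
Qed.

End ExpDominated.

Lemma filter_prod_le : filter_prod Fm Fp (fun ab : R * R => fst ab <= snd ab).
Proof.
  apply (Filter_prod _ _ _ (fun a => a < 0) (fun b => 0 < b));
    [exists 0; auto|exists 0; auto|simpl; intros; lra].
Qed.

Definition int_exp_neg_abs : R := RInt_gen (fun x => exp (- Rabs x)) Fm Fp.

Lemma RInt_gen_exp_dominated_le (f : R -> R) K : (forall z, continuous f z) ->
  exp_dominated K f -> Rabs (RInt_gen f Fm Fp) <= K * int_exp_neg_abs.
Proof.
  intros Hc Hd.
  assert (Habs : exp_dominated 1 (fun x => exp (- Rabs x))).
  { intros z. rewrite Rabs_right by (left; apply exp_pos). lra. }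
  assert (Habs_cont : forall z, continuous (fun x => exp (- Rabs x)) z).
  { intros z. apply (continuous_comp Rabs (fun u => exp (- u)));
      [apply continuous_Rabs|apply continuous_of_ex_derive; auto_derive; auto]. }
  apply (RInt_gen_norm f (fun z => K * exp (- Rabs z))).
  - apply filter_prod_le.
  - apply filter_prod_true; try typeclasses eauto. intros; apply Hd.
  - apply is_RInt_gen_exp_dominated with K; auto.
  - apply (is_RInt_gen_scal (fun x => exp (- Rabs x))).
    apply is_RInt_gen_exp_dominated with 1; auto.
Qed.

Lemma RInt_le_RInt_gen_nonneg (f : R -> R) a b : a <= b ->
  (forall z, continuous f z) -> (forall z, 0 <= f z) ->
  ex_RInt_gen f Fm Fp -> RInt f a b <= RInt_gen f Fm Fp.
Proof.
  intros Hab Hc Hp He.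
  pose proof (@RInt_gen_correct R_CompleteNormedModule _ _ _ _ f He) as Hl.
  set (l := RInt_gen f Fm Fp) in *. set (c := RInt f a b).
  destruct (Rle_lt_dec c l) as [|Hlt]; auto. exfalso.
  assert (Hpos : 0 < c - l) by lra.
  destruct (Hl (ball l (mkposreal _ Hpos))) as [Q R [M1 HM1] [M2 HM2] Himp];
    [exists (mkposreal _ Hpos); auto|].
  set (a' := Rmin M1 a - 1). set (b' := Rmax M2 b + 1).
  pose proof (Rmin_l M1 a). pose proof (Rmin_r M1 a).
  pose proof (Rmax_l M2 b). pose proof (Rmax_r M2 b).
  destruct (Himp a' b' (HM1 a' ltac:(unfold a'; lra)) (HM2 b' ltac:(unfold b'; lra)))
    as [y [Hy Hb]].
  simpl in Hy, Hb. change (Rabs (y - l) < c - l) in Hb. apply is_RInt_unique in Hy.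
  assert (Hex : forall u v, ex_RInt f u v) by (intros; apply ex_RInt_of_continuous; auto).
  assert (RInt f a' b' = RInt f a' a + c + RInt f b b').
  { unfold c. rewrite <- (RInt_Chasles f a' a b'), <- (RInt_Chasles f a b b') by auto.
    unfold plus; simpl. ring. }
  assert (0 <= RInt f a' a) by (apply RInt_ge_0; auto; unfold a'; lra).
  assert (0 <= RInt f b b') by (apply RInt_ge_0; auto; unfold b'; lra).
  pose proof (Rle_abs (y - l)). lra.
Qed.

Lemma is_RInt_gen_derive_zero (g dg : R -> R) :
  (forall x, is_derive g x (dg x)) -> (forall x, continuous dg x) ->
  filterlim g Fm (locally 0) -> filterlim g Fp (locally 0) -> is_RInt_gen dg Fm Fp 0.
Proof.
  intros Hd Hc Hm Hp. rewrite <- (Rminus_0_r 0).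
  apply (is_RInt_gen_ext_everywhere _ _ (Derive g));
    [intros; apply is_derive_unique, Hd|].
  apply is_RInt_gen_Derive; auto; apply filter_prod_true; try typeclasses eauto; intros.
  - eexists; apply Hd.
  - apply (continuous_ext dg); [intros; symmetry; apply is_derive_unique, Hd|auto].
Qed.

Lemma is_RInt_gen_exp_change (F : R -> R) (al be l : R) : 0 < al ->
  (forall x, 0 < x -> continuous F x) ->
  is_RInt_gen (fun v => al * exp (al * v + be) * F (exp (al * v + be))) Fm Fp l ->
  is_RInt_gen F (at_right 0) Fp l.
Proof.
  intros Hal Hc H P HP.
  destruct (H P HP) as [Q R [M1 HM1] [M2 HM2] Himp].
  set (psi x := (ln x - be) / al).
  assert (Hpsi : forall x, 0 < x -> exp (al * psi x + be) = x).
  { intros x Hx. unfold psi. replace (al * ((ln x - be) / al) + be) with (ln x) by (field; lra).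
    apply exp_ln, Hx. }
  assert (Hpsi_lt : forall x y, 0 < x -> x < exp (al * y + be) -> psi x < y).
  { intros x y Hx Hxy. apply (ln_increasing x) in Hxy; [|exact Hx].
    rewrite ln_exp in Hxy. unfold psi. apply Rmult_lt_reg_r with al; [exact Hal|].
    field_simplify; lra. }
  assert (Hpsi_gt : forall x y, exp (al * y + be) < x -> y < psi x).
  { intros x y Hxy. apply ln_increasing in Hxy; [|apply exp_pos].
    rewrite ln_exp in Hxy. unfold psi. apply Rmult_lt_reg_r with al; [exact Hal|].
    field_simplify; lra. }
  apply (Filter_prod _ _ _ (fun a => 0 < a /\ a < exp (al * M1 + be))
                           (fun b => exp (al * M2 + be) < b)).
  - exists (mkposreal _ (exp_pos (al * M1 + be))). intros y Hy Hy0.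
    change (Rabs (y - 0) < exp (al * M1 + be)) in Hy.
    rewrite Rminus_0_r, Rabs_right in Hy by lra. auto.
  - exists (exp (al * M2 + be)). auto.
  - intros a b [Ha0 Ha] Hb. simpl.
    pose proof (exp_pos (al * M2 + be)).
    destruct (Himp (psi a) (psi b) (HM1 _ (Hpsi_lt a M1 Ha0 Ha)) (HM2 _ (Hpsi_gt b M2 Hb)))
      as [y [Hy Py]].
    exists y. split; [|exact Py]. simpl in Hy.
    assert (Hex : ex_RInt F a b).
    { apply (@ex_RInt_continuous R_CompleteNormedModule). intros z Hz. apply Hc.
      assert (0 < Rmin a b) by (apply Rmin_glb_lt; lra). lra. }
    replace y with (RInt F a b); [apply (@RInt_correct R_CompleteNormedModule), Hex|].
    apply (@is_RInt_unique R_CompleteNormedModule) in Hy. rewrite <- Hy.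
    symmetry. apply (@is_RInt_unique R_CompleteNormedModule).
    rewrite <- (Hpsi a), <- (Hpsi b) at 2 by lra.
    apply (is_RInt_comp F (fun v => exp (al * v + be)) (fun v => al * exp (al * v + be))).
    + intros x _. apply Hc, exp_pos.
    + intros x _. split; [auto_derive; auto; ring|].
      apply continuous_of_ex_derive. auto_derive; auto.
Qed.

(** * The kernel *)

Definition scale (t : R) : R := / sqrt t.

Definition phi (t v : R) : R :=
  (t - 1) * (exp (scale t * v) - 1 - scale t * v) + (scale t * v) ^ 2 / 2.

Definition kernel (s t v : R) : R := exp (- phi t v / s ^ 2).

(* [t_min s] makes [sqrt t >= 16 s^2], so that the left tail of [phi t] grows like [4 s^2 |v|]. *)
Definition t_min (s : R) : R := 2 + (16 * s ^ 2) ^ 2.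

Definition kernel_bound (s : R) : R := exp (27 * s ^ 2 / 2) + 1.

Lemma scale_facts t : 1 <= t ->
  0 < scale t <= 1 /\ scale t * sqrt t = 1 /\ sqrt t * sqrt t = t.
Proof.
  intros Ht. assert (Hq : 1 <= sqrt t) by (rewrite <- sqrt_1; apply sqrt_le_1_alt; lra).
  unfold scale. split; [split|split].
  - apply Rinv_0_lt_compat. lra.
  - rewrite <- Rinv_1. apply Rinv_le_contravar; lra.
  - apply Rinv_l. lra.
  - apply sqrt_sqrt. lra.
Qed.

Lemma t_min_facts s t : 0 < s -> t_min s <= t -> 2 <= t /\ 16 * s ^ 2 <= sqrt t.
Proof.
  intros Hs Ht. unfold t_min in Ht. pose proof (pow_lt s 2 Hs).
  pose proof (pow2_ge_0 (16 * s ^ 2)).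
  split; [lra|].
  rewrite <- (sqrt_pow2 (16 * s ^ 2)) by lra. apply sqrt_le_1_alt. lra.
Qed.

Lemma scale_mul_abs_le t v : 1 <= t -> scale t * v <= Rabs v.
Proof.
  intros Ht. destruct (scale_facts t Ht) as [[He0 He1] _].
  destruct (Rle_dec 0 v); [rewrite Rabs_right by lra|rewrite Rabs_left by lra]; nra.
Qed.

Lemma scale_sqr_mul t v : 1 <= t -> (scale t * v) ^ 2 * t = v ^ 2.
Proof.
  intros Ht. destruct (scale_facts t Ht) as [_ [He Hqq]]. unfold scale in *.
  set (q := sqrt t) in *. rewrite <- Hqq.
  replace ((/ q * v) ^ 2 * (q * q)) with ((/ q * q) ^ 2 * v ^ 2) by ring. rewrite He. ring.
Qed.

Lemma phi_ge_sqr t v : 1 <= t -> -2 <= scale t * v -> v ^ 2 / 6 <= phi t v.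
Proof.
  intros Ht Hv. unfold phi.
  pose proof (exp_remainder_ge_sqr _ Hv).
  pose proof (scale_sqr_mul t v Ht).
  assert ((t - 1) * ((scale t * v) ^ 2 / 6)
          <= (t - 1) * (exp (scale t * v) - 1 - scale t * v))
    by (apply Rmult_le_compat_l; lra).
  nra.
Qed.

Lemma phi_ge_lin s t v : 2 <= t -> 16 * s ^ 2 <= sqrt t -> scale t * v <= -2 ->
  4 * s ^ 2 * (- v) <= phi t v.
Proof.
  intros Ht Hq Hv. destruct (scale_facts t ltac:(lra)) as [[He0 He1] [He Hqq]]. unfold phi.
  pose proof (exp_remainder_ge_lin _ Hv).
  assert (Hv0 : v < 0) by nra.
  assert (Hlin : (t - 1) * scale t >= sqrt t / 2).
  { assert (t * scale t = sqrt t).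
    { transitivity (sqrt t * (scale t * sqrt t)); [rewrite <- Hqq at 1; ring|rewrite He; ring]. }
    nra. }
  assert ((t - 1) * (- (scale t * v) / 2)
          <= (t - 1) * (exp (scale t * v) - 1 - scale t * v))
    by (apply Rmult_le_compat_l; lra).
  pose proof (pow2_ge_0 (scale t * v)). nra.
Qed.

Lemma kernel_le s t v : 0 < s -> t_min s <= t ->
  kernel s t v <= exp (- v ^ 2 / (6 * s ^ 2)) + exp (- 4 * Rabs v).
Proof.
  intros Hs Ht. destruct (t_min_facts s t Hs Ht) as [H2 Hq].
  pose proof (pow_lt s 2 Hs). unfold kernel.
  pose proof (exp_pos (- v ^ 2 / (6 * s ^ 2))). pose proof (exp_pos (- 4 * Rabs v)).
  destruct (Rle_dec (-2) (scale t * v)) as [Hv|Hv].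
  - pose proof (phi_ge_sqr t v ltac:(lra) Hv).
    assert (exp (- phi t v / s ^ 2) <= exp (- v ^ 2 / (6 * s ^ 2))); [|lra].
    apply exp_le_compat. unfold Rdiv. rewrite Rinv_mult.
    apply Rmult_le_reg_r with (s ^ 2); [lra|].
    field_simplify; lra.
  - pose proof (phi_ge_lin s t v H2 Hq ltac:(lra)).
    assert (v < 0) by (destruct (scale_facts t ltac:(lra)) as [[? ?] _]; nra).
    rewrite Rabs_left by lra.
    assert (exp (- phi t v / s ^ 2) <= exp (- 4 * - v)); [|lra].
    apply exp_le_compat. apply Rmult_le_reg_r with (s ^ 2); [lra|].
    field_simplify; lra.
Qed.

(* [2a - a^2 / (6 s^2) <= 27 s^2 / 2 - a] is [(a - 9 s^2)^2 >= 0]. *)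
Lemma exp_two_abs_mul_envelope_le s v : 0 < s ->
  exp (2 * Rabs v) * (exp (- v ^ 2 / (6 * s ^ 2)) + exp (- 4 * Rabs v))
  <= kernel_bound s * exp (- Rabs v).
Proof.
  intros Hs. unfold kernel_bound. set (a := Rabs v).
  assert (Hv2 : v ^ 2 = a ^ 2) by (unfold a; rewrite <- (pow2_abs v); reflexivity).
  pose proof (pow_lt s 2 Hs).
  rewrite Rmult_plus_distr_l, <- !exp_plus, Rmult_plus_distr_r, <- exp_plus.
  assert (exp (2 * a + - v ^ 2 / (6 * s ^ 2)) <= exp (27 * s ^ 2 / 2 + - a)).
  { apply exp_le_compat. rewrite Hv2.
    assert (27 * s ^ 2 / 2 + - a - (2 * a + - a ^ 2 / (6 * s ^ 2))
            = (a - 9 * s ^ 2) ^ 2 / (6 * s ^ 2)) by (field; lra).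
    assert (0 <= (a - 9 * s ^ 2) ^ 2 / (6 * s ^ 2))
      by (apply Rdiv_le_0_compat; [apply pow2_ge_0|lra]).
    lra. }
  assert (exp (2 * a + - 4 * a) <= exp (- a))
    by (apply exp_le_compat; unfold a; pose proof (Rabs_pos v); lra).
  lra.
Qed.

Lemma kernel_ge s t v : 0 < s -> 1 <= t -> -1 <= v <= 1 -> exp (- 2 / s ^ 2) <= kernel s t v.
Proof.
  intros Hs Ht Hv. destruct (scale_facts t Ht) as [[He0 He1] _].
  pose proof (pow_lt s 2 Hs). unfold kernel, phi. apply exp_le_compat.
  assert (Hu : -1 <= scale t * v <= 1) by (split; nra).
  pose proof (exp_remainder_le_sqr _ Hu).
  pose proof (scale_sqr_mul t v Ht).
  assert ((t - 1) * (exp (scale t * v) - 1 - scale t * v) + (scale t * v) ^ 2 / 2 <= 2).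
  { assert ((t - 1) * (exp (scale t * v) - 1 - scale t * v)
            <= (t - 1) * (2 * (scale t * v) ^ 2)) by (apply Rmult_le_compat_l; lra).
    pose proof (pow2_ge_0 (scale t * v)). nra. }
  apply Rmult_le_reg_r with (s ^ 2); [lra|]. field_simplify; lra.
Qed.

Lemma is_derive_phi t v :
  is_derive (phi t) v (scale t * ((t - 1) * (exp (scale t * v) - 1) + scale t * v)).
Proof. unfold phi. auto_derive; auto. field. Qed.

Lemma is_derive_kernel s t v : 0 < s ->
  is_derive (kernel s t) v
    (- (scale t / s ^ 2) * ((t - 1) * (exp (scale t * v) - 1) + scale t * v) * kernel s t v).
Proof.
  intros Hs. pose proof (pow_lt s 2 Hs).
  set (dphi := scale t * ((t - 1) * (exp (scale t * v) - 1) + scale t * v)).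
  assert (Hin : is_derive (fun v => - phi t v / s ^ 2) v (- / s ^ 2 * dphi)).
  { apply (is_derive_ext (fun v => - / s ^ 2 * phi t v)).
    - intros x. change (- / s ^ 2 * phi t x = - phi t x / s ^ 2). field. lra.
    - apply is_derive_scal, is_derive_phi. }
  assert (Hout : is_derive exp (- phi t v / s ^ 2) (exp (- phi t v / s ^ 2)))
    by (apply is_derive_Reals, derivable_pt_lim_exp).
  pose proof (is_derive_comp exp (fun v => - phi t v / s ^ 2) v _ _ Hout Hin) as Hd.
  unfold scal in Hd; simpl in Hd; unfold mult in Hd; simpl in Hd.
  unfold kernel. replace (- (scale t / s ^ 2) * ((t - 1) * (exp (scale t * v) - 1)
    + scale t * v) * exp (- phi t v / s ^ 2)) with (- / s ^ 2 * dphi * exp (- phi t v / s ^ 2))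
    by (unfold dphi; field; lra).
  exact Hd.
Qed.

(** * Moments of the kernel and Stein identities *)

Definition kmom (s t : R) (h : R -> R) : R := RInt_gen (fun v => h v * kernel s t v) Fm Fp.

Definition A0 s t := kmom s t (fun _ => 1).
Definition A1 s t := kmom s t (fun v => exp (scale t * v)).
Definition A2 s t := kmom s t (fun v => exp (2 * (scale t * v))).
Definition B0 s t := kmom s t (fun v => v).
Definition B1 s t := kmom s t (fun v => v * exp (scale t * v)).

Section Moments.

Variables s t : R.
Hypothesis Hs : 0 < s.
Hypothesis Ht : t_min s <= t.

Let Ht1 : 1 <= t.
Proof. destruct (t_min_facts s t Hs Ht). lra. Qed.

Lemma kernel_continuous v : continuous (kernel s t) v.
Proof. apply continuous_of_ex_derive. eexists. apply is_derive_kernel; auto. Qed.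

Lemma kernel_weighted_dominated (h : R -> R) :
  (forall v, Rabs (h v) <= exp (2 * Rabs v)) ->
  exp_dominated (kernel_bound s) (fun v => h v * kernel s t v).
Proof.
  intros Hh v. pose proof (exp_pos (- phi t v / s ^ 2)).
  rewrite Rabs_mult, (Rabs_right (kernel s t v)) by (left; assumption).
  eapply Rle_trans; [|apply exp_two_abs_mul_envelope_le, Hs].
  apply Rmult_le_compat; [apply Rabs_pos|left; assumption|apply Hh|].
  apply kernel_le; assumption.
Qed.

Lemma is_RInt_gen_kmom (h : R -> R) : (forall v, continuous h v) ->
  (forall v, Rabs (h v) <= exp (2 * Rabs v)) ->
  is_RInt_gen (fun v => h v * kernel s t v) Fm Fp (kmom s t h).
Proof.
  intros Hc Hh. apply is_RInt_gen_exp_dominated with (kernel_bound s).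
  - intros v. apply (continuous_mult h (kernel s t)); [apply Hc|apply kernel_continuous].
  - apply kernel_weighted_dominated, Hh.
Qed.

Lemma kmom_abs_le (h : R -> R) : (forall v, continuous h v) ->
  (forall v, Rabs (h v) <= exp (2 * Rabs v)) ->
  Rabs (kmom s t h) <= kernel_bound s * int_exp_neg_abs.
Proof.
  intros Hc Hh. apply RInt_gen_exp_dominated_le.
  - intros v. apply (continuous_mult h (kernel s t)); [apply Hc|apply kernel_continuous].
  - apply kernel_weighted_dominated, Hh.
Qed.

Lemma abs_exp_scale_le v : Rabs (exp (scale t * v)) <= exp (Rabs v).
Proof.
  rewrite Rabs_right by (left; apply exp_pos).
  apply exp_le_compat, scale_mul_abs_le, Ht1.
Qed.

Lemma abs_one_le_exp_two_abs v : Rabs 1 <= exp (2 * Rabs v).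
Proof. rewrite Rabs_R1, <- exp_0. apply exp_le_compat. pose proof (Rabs_pos v). lra. Qed.

Lemma abs_exp_scale_le_exp_two_abs v : Rabs (exp (scale t * v)) <= exp (2 * Rabs v).
Proof.
  eapply Rle_trans; [apply abs_exp_scale_le|]. apply exp_le_compat.
  pose proof (Rabs_pos v). lra.
Qed.

Lemma abs_exp_two_scale_le v : Rabs (exp (2 * (scale t * v))) <= exp (2 * Rabs v).
Proof.
  rewrite Rabs_right by (left; apply exp_pos). apply exp_le_compat.
  pose proof (scale_mul_abs_le t v Ht1). lra.
Qed.

Lemma abs_le_exp_two_abs v : Rabs v <= exp (2 * Rabs v).
Proof. pose proof (le_exp_self (2 * Rabs v)). pose proof (Rabs_pos v). lra. Qed.

Lemma abs_mul_exp_scale_le v : Rabs (v * exp (scale t * v)) <= exp (2 * Rabs v).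
Proof.
  rewrite Rabs_mult. replace (2 * Rabs v) with (Rabs v + Rabs v) by ring. rewrite exp_plus.
  apply Rmult_le_compat; [apply Rabs_pos|apply Rabs_pos|apply le_exp_self|].
  apply abs_exp_scale_le.
Qed.

Lemma kernel_dominated : exp_dominated (kernel_bound s) (kernel s t).
Proof.
  intros v. rewrite <- (Rmult_1_l (kernel s t v)).
  apply (kernel_weighted_dominated (fun _ => 1)), abs_one_le_exp_two_abs.
Qed.

Lemma A0_correct : is_RInt_gen (fun v => 1 * kernel s t v) Fm Fp (A0 s t).
Proof.
  apply is_RInt_gen_kmom; [intros; apply continuous_const|apply abs_one_le_exp_two_abs].
Qed.

Lemma A1_correct : is_RInt_gen (fun v => exp (scale t * v) * kernel s t v) Fm Fp (A1 s t).
Proof.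
  apply is_RInt_gen_kmom; [intros; apply continuous_of_ex_derive; auto_derive; auto|].
  apply abs_exp_scale_le_exp_two_abs.
Qed.

Lemma A2_correct :
  is_RInt_gen (fun v => exp (2 * (scale t * v)) * kernel s t v) Fm Fp (A2 s t).
Proof.
  apply is_RInt_gen_kmom; [intros; apply continuous_of_ex_derive; auto_derive; auto|].
  apply abs_exp_two_scale_le.
Qed.

Lemma B0_correct : is_RInt_gen (fun v => v * kernel s t v) Fm Fp (B0 s t).
Proof.
  apply is_RInt_gen_kmom; [intros; apply continuous_id|apply abs_le_exp_two_abs].
Qed.

Lemma B1_correct :
  is_RInt_gen (fun v => v * exp (scale t * v) * kernel s t v) Fm Fp (B1 s t).
Proof.
  apply is_RInt_gen_kmom; [intros; apply continuous_of_ex_derive; auto_derive; auto|].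
  apply abs_mul_exp_scale_le.
Qed.

Lemma B0_abs_le : Rabs (B0 s t) <= kernel_bound s * int_exp_neg_abs.
Proof. apply kmom_abs_le; [intros; apply continuous_id|apply abs_le_exp_two_abs]. Qed.

Lemma B1_abs_le : Rabs (B1 s t) <= kernel_bound s * int_exp_neg_abs.
Proof.
  apply kmom_abs_le; [intros; apply continuous_of_ex_derive; auto_derive; auto|].
  apply abs_mul_exp_scale_le.
Qed.

Lemma A0_ge : 2 * exp (- 2 / s ^ 2) <= A0 s t.
Proof.
  unfold A0, kmom.
  replace (2 * exp (- 2 / s ^ 2)) with (RInt (fun _ => exp (- 2 / s ^ 2)) (-1) 1)
    by (rewrite RInt_const; unfold scal; simpl; unfold mult; simpl; ring).
  assert (Hc : forall v, continuous (fun v => 1 * kernel s t v) v).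
  { intros v. apply (continuous_mult (fun _ => 1) (kernel s t));
      [apply continuous_const|apply kernel_continuous]. }
  eapply Rle_trans; [|apply RInt_le_RInt_gen_nonneg; auto].
  - apply RInt_le; [lra|apply ex_RInt_const| |].
    + apply (@ex_RInt_continuous R_CompleteNormedModule). intros; apply Hc.
    + intros v Hv. rewrite Rmult_1_l. apply kernel_ge; auto. lra.
  - lra.
  - intros v. rewrite Rmult_1_l. left; apply exp_pos.
  - exists (A0 s t). apply A0_correct.
Qed.

Lemma continuous_mul_kernel (g : R -> R) v : ex_derive g v ->
  continuous (fun v => g v * kernel s t v) v.
Proof.
  intros Hg. apply continuous_of_ex_derive, ex_derive_mult; [exact Hg|].
  eexists. apply is_derive_kernel, Hs.
Qed.

Lemma is_derive_exp_scale_mul_kernel v :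
  is_derive (fun v => exp (scale t * v) * kernel s t v) v
    ((scale t - scale t / s ^ 2 * ((t - 1) * (exp (scale t * v) - 1) + scale t * v))
     * exp (scale t * v) * kernel s t v).
Proof.
  replace ((scale t - scale t / s ^ 2 * ((t - 1) * (exp (scale t * v) - 1) + scale t * v))
           * exp (scale t * v) * kernel s t v)
    with (scale t * exp (scale t * v) * kernel s t v + exp (scale t * v) *
          (- (scale t / s ^ 2) * ((t - 1) * (exp (scale t * v) - 1) + scale t * v)
           * kernel s t v)) by ring.
  apply (is_derive_mult (fun v => exp (scale t * v)) (kernel s t));
    [auto_derive; auto; ring|apply is_derive_kernel, Hs|].
  intros; apply Rmult_comm.
Qed.

Lemma stein_A0_A1 : (t - 1) * (A1 s t - A0 s t) + scale t * B0 s t = 0.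
Proof.
  destruct (scale_facts t Ht1) as [[He0 _] _]. pose proof (pow_lt s 2 Hs).
  set (c := scale t / s ^ 2).
  set (dK v := - c * ((t - 1) * (exp (scale t * v) - 1) + scale t * v) * kernel s t v).
  assert (Hzero : is_RInt_gen dK Fm Fp 0).
  { destruct (exp_dominated_lim _ _ kernel_dominated) as [Lm Lp].
    apply (is_RInt_gen_derive_zero (kernel s t)); auto.
    - intros v. apply is_derive_kernel, Hs.
    - intros v. apply continuous_mul_kernel. auto_derive; auto. }
  assert (Hlin : is_RInt_gen dK Fm Fp
                   (- c * ((t - 1) * (A1 s t - A0 s t) + scale t * B0 s t))).
  { apply (is_RInt_gen_ext_everywhere _ _ (fun v => - c * ((t - 1) * (exp (scale t * v)
      * kernel s t v - 1 * kernel s t v) + scale t * (v * kernel s t v))));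
      [intros v; unfold dK; ring|].
    apply (is_RInt_gen_scal (V := R_NormedModule)), (is_RInt_gen_plus (V := R_NormedModule)).
    - apply (is_RInt_gen_scal (V := R_NormedModule)), (is_RInt_gen_minus (V := R_NormedModule)).
      + apply A1_correct.
      + apply A0_correct.
    - apply (is_RInt_gen_scal (V := R_NormedModule)), B0_correct. }
  assert (0 < c) by (apply Rdiv_lt_0_compat; lra).
  pose proof (is_RInt_gen_unique_R dK _ _ _ _ Hzero Hlin) as E.
  symmetry in E. apply Rmult_integral in E. destruct E as [E|E]; [lra|exact E].
Qed.

Lemma stein_A1_A2 : s ^ 2 * A1 s t = (t - 1) * (A2 s t - A1 s t) + scale t * B1 s t.
Proof.
  destruct (scale_facts t Ht1) as [[He0 _] _]. pose proof (pow_lt s 2 Hs).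
  set (c := scale t / s ^ 2).
  set (dK v := (scale t - c * ((t - 1) * (exp (scale t * v) - 1) + scale t * v))
               * exp (scale t * v) * kernel s t v).
  assert (Hzero : is_RInt_gen dK Fm Fp 0).
  { destruct (exp_dominated_lim (fun v => exp (scale t * v) * kernel s t v) (kernel_bound s))
      as [Lm Lp]; [apply kernel_weighted_dominated, abs_exp_scale_le_exp_two_abs|].
    apply (is_RInt_gen_derive_zero (fun v => exp (scale t * v) * kernel s t v)); auto.
    - intros v. apply is_derive_exp_scale_mul_kernel.
    - intros v. apply (continuous_mul_kernel (fun v => (scale t - c * ((t - 1) *
        (exp (scale t * v) - 1) + scale t * v)) * exp (scale t * v))). auto_derive; auto. }
  assert (Hlin : is_RInt_gen dK Fm Fp
    (scale t * A1 s t - c * ((t - 1) * (A2 s t - A1 s t) + scale t * B1 s t))).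
  { apply (is_RInt_gen_ext_everywhere _ _ (fun v => scale t * (exp (scale t * v)
      * kernel s t v) - c * ((t - 1) * (exp (2 * (scale t * v)) * kernel s t v
      - exp (scale t * v) * kernel s t v) + scale t * (v * exp (scale t * v) * kernel s t v))));
      [intros v; unfold dK; rewrite exp_mult_two; ring|].
    apply (is_RInt_gen_minus (V := R_NormedModule)).
    - apply (is_RInt_gen_scal (V := R_NormedModule)), A1_correct.
    - apply (is_RInt_gen_scal (V := R_NormedModule)), (is_RInt_gen_plus (V := R_NormedModule)).
      + apply (is_RInt_gen_scal (V := R_NormedModule)), (is_RInt_gen_minus (V := R_NormedModule)).
        * apply A2_correct.
        * apply A1_correct.
      + apply (is_RInt_gen_scal (V := R_NormedModule)), B1_correct. }
  pose proof (is_RInt_gen_unique_R dK _ _ _ _ Hzero Hlin) as E.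
  assert (Hc : c * s ^ 2 = scale t) by (unfold c; field; lra).
  assert (Hprod : scale t * (s ^ 2 * A1 s t - ((t - 1) * (A2 s t - A1 s t) + scale t * B1 s t))
    = s ^ 2 * (scale t * A1 s t - c * ((t - 1) * (A2 s t - A1 s t) + scale t * B1 s t)))
    by (rewrite <- Hc; ring).
  rewrite <- E, Rmult_0_r in Hprod.
  apply Rmult_integral in Hprod. destruct Hprod; lra.
Qed.

End Moments.

(** * Asymptotics as [t] tends to infinity *)

Lemma is_lim_mult_R (f g : R -> R) x (a b : R) :
  is_lim f x a -> is_lim g x b -> is_lim (fun y => f y * g y) x (a * b).
Proof. intros Hf Hg. apply (is_lim_mult f g x a b Hf Hg). exact I. Qed.

Lemma is_lim_div_R (f g : R -> R) x (a b : R) : b <> 0 ->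
  is_lim f x a -> is_lim g x b -> is_lim (fun y => f y / g y) x (a / b).
Proof.
  intros Hb Hf Hg. apply (is_lim_div f g x a b Hf Hg); [|exact I].
  intros E. injection E. exact Hb.
Qed.

Lemma is_lim_inv_sub1 : is_lim (fun t => / (t - 1)) p_infty 0.
Proof.
  apply (is_lim_inv (fun t => t - 1) p_infty p_infty); [|discriminate].
  apply (is_lim_minus (fun t => t) (fun _ => 1) p_infty p_infty 1);
    [apply is_lim_id|apply is_lim_const|reflexivity].
Qed.

Lemma is_lim_scale : is_lim scale p_infty 0.
Proof.
  apply (is_lim_inv sqrt p_infty p_infty); [|discriminate].
  apply (is_lim_sqrt_p (fun t => t)), is_lim_id.
Qed.

Lemma is_lim_const_div_id (a : R) : is_lim (fun t => a / t) p_infty 0.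
Proof.
  replace (Finite 0) with (Finite (a * 0)) by (f_equal; ring).
  apply is_lim_mult_R; [apply is_lim_const|].
  apply (is_lim_inv (fun t => t) p_infty p_infty); [apply is_lim_id|discriminate].
Qed.

Lemma is_lim_exp_of_0 (g : R -> R) : is_lim g p_infty 0 -> is_lim (fun t => exp (g t)) p_infty 1.
Proof.
  intros H. rewrite <- exp_0.
  apply (filterlim_comp R R R g exp _ (locally 0)); [exact H|].
  apply continuity_pt_filterlim, continuity_pt_of_ex_derive. auto_derive; auto.
Qed.

Definition expm1_ratio (y : R) : R := y / (exp y * (exp y - 1)).

Lemma expm1_ratio_bounds y : 0 < y <= 1 ->
  / ((1 + y + 2 * y ^ 2) * (1 + 2 * y)) <= expm1_ratio y <= 1.
Proof.
  intros Hy. pose proof (exp_ineq1_le y). pose proof (exp_remainder_le_sqr y ltac:(lra)).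
  unfold expm1_ratio. assert (0 < exp y - 1) by lra. split.
  - assert (exp y * (exp y - 1) <= (1 + y + 2 * y ^ 2) * (y * (1 + 2 * y)))
      by (apply Rmult_le_compat; nra).
    replace (y / (exp y * (exp y - 1))) with (/ (exp y * (exp y - 1) / y)) by (field; lra).
    apply Rinv_le_contravar; [apply Rdiv_lt_0_compat; nra|].
    apply Rmult_le_reg_r with y; [lra|]. field_simplify; nra.
  - apply Rmult_le_reg_r with (exp y * (exp y - 1)); [nra|]. field_simplify; nra.
Qed.

Lemma is_lim_expm1_ratio (a : R) : 0 < a -> is_lim (fun t => expm1_ratio (a / t)) p_infty 1.
Proof.
  intros Ha.
  apply (is_lim_le_le_loc (fun t => / ((1 + a / t + 2 * (a / t) ^ 2) * (1 + 2 * (a / t))))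
           (fun _ => 1)).
  - exists a. intros t Ht. apply expm1_ratio_bounds. split; [apply Rdiv_lt_0_compat; lra|].
    apply Rmult_le_reg_r with t; [lra|]. field_simplify; lra.
  - replace (Finite 1) with (Rbar_inv ((1 + 0 + 2 * 0 ^ 2) * (1 + 2 * 0)))
      by (simpl; f_equal; field).
    apply is_lim_inv; [|simpl; intros E; injection E; lra].
    pose proof (is_lim_const_div_id a) as H0.
    apply is_lim_mult_R; apply is_lim_plus'; try apply is_lim_plus';
      try apply is_lim_const; try apply is_lim_mult_R; try apply is_lim_const; auto.
    apply (is_lim_ext (fun t => a / t * (a / t))); [intros; ring|].
    replace (0 ^ 2) with (0 * 0) by ring. apply is_lim_mult_R; auto.
  - apply is_lim_const.
Qed.

Definition mean_ratio s t : R := A1 s t / A0 s t.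
Definition var_ratio s t : R := A2 s t / A0 s t - mean_ratio s t ^ 2.
Definition var_correction s t : R :=
  scale t * (B1 s t - mean_ratio s t * B0 s t) / (s ^ 2 * A0 s t).

Section Asymptotics.

Variable s : R.
Hypothesis Hs : 0 < s.

Let c0 := 2 * exp (- 2 / s ^ 2).
Let Kb := kernel_bound s * int_exp_neg_abs.

Let c0_pos : 0 < c0.
Proof. unfold c0. pose proof (exp_pos (- 2 / s ^ 2)). lra. Qed.

Let moment_facts t : t_min s <= t ->
  2 <= t /\ 0 < scale t <= 1 /\ c0 <= A0 s t /\ Rabs (B0 s t) <= Kb /\ Rabs (B1 s t) <= Kb.
Proof.
  intros Ht. destruct (t_min_facts s t Hs Ht) as [H2 _].
  split; [lra|split; [apply scale_facts; lra|]].
  split; [apply A0_ge; auto|split; [apply B0_abs_le|apply B1_abs_le]; auto].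
Qed.

Lemma mean_ratio_eq t : t_min s <= t ->
  mean_ratio s t = 1 - scale t * B0 s t / ((t - 1) * A0 s t).
Proof.
  intros Ht. destruct (moment_facts t Ht) as [H2 [_ [HA _]]].
  pose proof (stein_A0_A1 s t Hs Ht). unfold mean_ratio. field_simplify_eq; lra.
Qed.

Lemma mean_ratio_dev_le t : t_min s <= t ->
  Rabs (scale t * B0 s t / ((t - 1) * A0 s t)) <= Kb / c0 / (t - 1).
Proof.
  intros Ht. destruct (moment_facts t Ht) as [H2 [[He0 He1] [HA [HB _]]]].
  pose proof (Rabs_pos (B0 s t)).
  unfold Rdiv. rewrite !Rabs_mult, Rabs_inv, Rabs_mult.
  rewrite (Rabs_right (scale t)), (Rabs_right (t - 1)), (Rabs_right (A0 s t)) by lra.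
  rewrite Rinv_mult.
  assert (/ A0 s t <= / c0) by (apply Rinv_le_contravar; lra).
  assert (0 < / A0 s t) by (apply Rinv_0_lt_compat; lra).
  assert (0 < / (t - 1)) by (apply Rinv_0_lt_compat; lra).
  assert (scale t * Rabs (B0 s t) * / A0 s t <= Kb * / c0).
  { apply Rle_trans with (Kb * / A0 s t); [apply Rmult_le_compat_r; nra|].
    apply Rmult_le_compat_l; lra. }
  nra.
Qed.

Lemma is_lim_mean_ratio : is_lim (mean_ratio s) p_infty 1.
Proof.
  apply (is_lim_le_le_loc (fun t => 1 - Kb / c0 * / (t - 1)) (fun t => 1 + Kb / c0 * / (t - 1))).
  - exists (t_min s). intros t Ht. rewrite mean_ratio_eq by lra.
    pose proof (mean_ratio_dev_le t ltac:(lra)) as H.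
    unfold Rdiv in H |- *. apply Rabs_le_between in H. lra.
  - replace (Finite 1) with (Finite (1 - Kb / c0 * 0)) by (f_equal; ring).
    apply is_lim_minus'; [apply is_lim_const|].
    apply is_lim_mult_R; [apply is_lim_const|apply is_lim_inv_sub1].
  - replace (Finite 1) with (Finite (1 + Kb / c0 * 0)) by (f_equal; ring).
    apply is_lim_plus'; [apply is_lim_const|].
    apply is_lim_mult_R; [apply is_lim_const|apply is_lim_inv_sub1].
Qed.

Lemma var_ratio_eq t : t_min s <= t ->
  var_ratio s t = s ^ 2 * (mean_ratio s t - var_correction s t) / (t - 1).
Proof.
  intros Ht. destruct (moment_facts t Ht) as [H2 [_ [HA _]]].
  pose proof (stein_A0_A1 s t Hs Ht). pose proof (stein_A1_A2 s t Hs Ht).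
  pose proof (pow_lt s 2 Hs).
  assert (HA2 : A2 s t = A1 s t + (s ^ 2 * A1 s t - scale t * B1 s t) / (t - 1))
    by (field_simplify_eq; lra).
  assert (HA1 : A1 s t = A0 s t - scale t * B0 s t / (t - 1)) by (field_simplify_eq; lra).
  unfold var_ratio, var_correction, mean_ratio. rewrite HA2, HA1. field. lra.
Qed.

Lemma mean_ratio_abs_le t : t_min s <= t -> Rabs (mean_ratio s t) <= 1 + Kb / c0.
Proof.
  intros Ht. destruct (moment_facts t Ht) as [H2 [_ [_ [HB _]]]].
  rewrite mean_ratio_eq by exact Ht. pose proof (mean_ratio_dev_le t Ht).
  assert (0 <= Kb / c0) by (apply Rdiv_le_0_compat; [pose proof (Rabs_pos (B0 s t)); lra|lra]).
  assert (Kb / c0 / (t - 1) <= Kb / c0).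
  { set (k := Kb / c0) in *. unfold Rdiv.
    assert (/ (t - 1) <= 1) by (rewrite <- Rinv_1; apply Rinv_le_contravar; lra).
    assert (0 < / (t - 1)) by (apply Rinv_0_lt_compat; lra). nra. }
  eapply Rle_trans; [apply Rabs_triang|]. rewrite Rabs_Ropp, Rabs_R1. lra.
Qed.

Lemma var_correction_abs_le t : t_min s <= t ->
  Rabs (var_correction s t) <= scale t * (Kb * (2 + Kb / c0) / (s ^ 2 * c0)).
Proof.
  intros Ht. destruct (moment_facts t Ht) as [H2 [[He0 He1] [HA [HB0 HB1]]]].
  pose proof (pow_lt s 2 Hs). pose proof (mean_ratio_abs_le t Ht) as Hm.
  assert (0 <= Kb) by (pose proof (Rabs_pos (B0 s t)); lra).
  assert (0 <= Kb / c0) by (apply Rdiv_le_0_compat; lra).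
  assert (Hn : Rabs (B1 s t - mean_ratio s t * B0 s t) <= Kb * (2 + Kb / c0)).
  { eapply Rle_trans; [apply Rabs_triang|]. rewrite Rabs_Ropp, Rabs_mult.
    assert (Rabs (mean_ratio s t) * Rabs (B0 s t) <= (1 + Kb / c0) * Kb)
      by (apply Rmult_le_compat; auto using Rabs_pos). nra. }
  unfold var_correction, Rdiv. rewrite !Rabs_mult, Rabs_inv, Rabs_mult.
  rewrite (Rabs_right (scale t)), (Rabs_right (s ^ 2)), (Rabs_right (A0 s t)) by lra.
  rewrite !Rinv_mult.
  assert (/ A0 s t <= / c0) by (apply Rinv_le_contravar; lra).
  assert (0 < / A0 s t) by (apply Rinv_0_lt_compat; lra).
  assert (0 < / s ^ 2) by (apply Rinv_0_lt_compat; lra).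
  pose proof (Rabs_pos (B1 s t - mean_ratio s t * B0 s t)).
  assert (Rabs (B1 s t - mean_ratio s t * B0 s t) * (/ s ^ 2 * / A0 s t)
          <= Kb * (2 + Kb / c0) * (/ s ^ 2 * / c0)).
  { apply Rmult_le_compat; try lra; [apply Rmult_le_pos; lra|apply Rmult_le_compat_l; lra]. }
  nra.
Qed.

Lemma is_lim_var_correction : is_lim (var_correction s) p_infty 0.
Proof.
  set (D := Kb * (2 + Kb / c0) / (s ^ 2 * c0)).
  apply (is_lim_le_le_loc (fun t => - (scale t * D)) (fun t => scale t * D)).
  - exists (t_min s). intros t Ht. pose proof (var_correction_abs_le t ltac:(lra)) as H.
    apply Rabs_le_between in H. unfold D. lra.
  - replace (Finite 0) with (Finite (- (0 * D))) by (f_equal; ring).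
    apply (is_lim_opp (fun t => scale t * D) p_infty (0 * D)).
    apply is_lim_mult_R; [apply is_lim_scale|apply is_lim_const].
  - replace (Finite 0) with (Finite (0 * D)) by (f_equal; ring).
    apply is_lim_mult_R; [apply is_lim_scale|apply is_lim_const].
Qed.

Lemma is_lim_mean_ratio_normalized :
  is_lim (fun t => mean_ratio s t / exp (s ^ 2 / t / 2)) p_infty 1.
Proof.
  replace (Finite 1) with (Finite (1 / 1)) by (f_equal; field).
  apply is_lim_div_R; [lra|apply is_lim_mean_ratio|].
  apply is_lim_exp_of_0. replace (Finite 0) with (Finite (0 / 2)) by (f_equal; field).
  apply is_lim_div_R; [lra|apply is_lim_const_div_id|apply is_lim_const].
Qed.

Lemma is_lim_var_ratio_normalized :
  is_lim (fun t => var_ratio s t / (exp (s ^ 2 / t) * (exp (s ^ 2 / t) - 1))) p_infty 1.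
Proof.
  pose proof (pow_lt s 2 Hs).
  apply (is_lim_ext_loc (fun t => (mean_ratio s t - var_correction s t) * (t / (t - 1))
                                   * expm1_ratio (s ^ 2 / t))).
  - exists (t_min s). intros t Ht. destruct (t_min_facts s t Hs ltac:(lra)) as [H2 _].
    rewrite var_ratio_eq by lra. unfold expm1_ratio.
    assert (0 < s ^ 2 / t) by (apply Rdiv_lt_0_compat; lra).
    pose proof (exp_ineq1 (s ^ 2 / t) ltac:(lra)).
    field. repeat split; lra.
  - replace (Finite 1) with (Finite ((1 - 0) * 1 * 1)) by (f_equal; ring).
    apply is_lim_mult_R; [apply is_lim_mult_R|apply is_lim_expm1_ratio; lra].
    + apply is_lim_minus'; [apply is_lim_mean_ratio|apply is_lim_var_correction].
    + apply (is_lim_ext_loc (fun t => 1 + / (t - 1))); [exists 1; intros; field; lra|].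
      replace (Finite 1) with (Finite (1 + 0)) by (f_equal; ring).
      apply is_lim_plus'; [apply is_lim_const|apply is_lim_inv_sub1].
Qed.

End Asymptotics.

(** * The tilted lognormal moments *)

Lemma LambertW_spec a : 0 < a -> 0 < LambertW a /\ LambertW a * exp (LambertW a) = a.
Proof.
  intros Ha. unfold LambertW. apply epsilon_spec.
  destruct (IVT_gen (fun w => w * exp w) 0 a a) as [x [Hx E]].
  - intros x. apply continuity_pt_of_ex_derive. auto_derive; auto.
  - rewrite Rmult_0_l. assert (1 <= exp a) by (rewrite <- exp_0; apply exp_le_compat; lra).
    unfold Rmin, Rmax. destruct (Rle_dec 0 (a * exp a)); nra.
  - exists x. unfold Rmin, Rmax in Hx. destruct (Rle_dec 0 a); [|lra].
    split; [|exact E]. destruct (Req_dec x 0) as [->|]; [rewrite Rmult_0_l in E|]; lra.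
Qed.

Lemma ln_le_two_LambertW a : 0 < a -> ln a <= 2 * LambertW a.
Proof.
  intros Ha. destruct (LambertW_spec a Ha) as [Hp E].
  rewrite <- (ln_exp (2 * LambertW a)).
  destruct (Req_dec a (exp (2 * LambertW a))) as [Z|Z]; [rewrite <- Z; lra|].
  left. apply ln_increasing; [exact Ha|].
  assert (a <= exp (2 * LambertW a)); [|lra].
  rewrite <- E at 1. rewrite exp_mult_two.
  apply Rmult_le_compat_r; [left; apply exp_pos|apply le_exp_self].
Qed.

Lemma int0inf_unique (F : R -> R) l : is_RInt_gen F (at_right 0) Fp l -> int0inf F = l.
Proof. intros H. exact (RInt_gen_eq_of_is_RInt_gen F (at_right 0) Fp l H). Qed.

Definition w_of (s th : R) : R := LambertW (th * s ^ 2).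
Definition t_of (s th : R) : R := 1 + w_of s th.

Section TiltedMoments.

Variables s th : R.
Hypothesis Hs : 0 < s.
Hypothesis Hth : 0 < th.

Let w := w_of s th.
Let t := t_of s th.

(* Jacobian times normalisation of the substitution [x = exp (scale t * v - w)]. *)
Let c_subst := scale t / (s * sqrt (2 * PI)) * exp (- (w + w ^ 2 / 2) / s ^ 2).

Let w_spec : 0 < w /\ w * exp w = th * s ^ 2.
Proof. apply LambertW_spec, Rmult_lt_0_compat, pow_lt; assumption. Qed.

Let t_ge_1 : 1 <= t.
Proof. unfold t, t_of. fold w. destruct w_spec. lra. Qed.

Let sqrt_2PI_pos : 0 < sqrt (2 * PI).
Proof. apply sqrt_lt_R0. pose proof PI_RGT_0. lra. Qed.

Let c_subst_pos : 0 < c_subst.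
Proof.
  destruct (scale_facts t t_ge_1) as [[He0 _] _].
  apply Rmult_lt_0_compat; [|apply exp_pos].
  apply Rdiv_lt_0_compat; [lra|apply Rmult_lt_0_compat; assumption].
Qed.

(* [w e^w = th s^2] turns [th x] into [w e^{scale t v} / s^2], and the Gaussian exponent
   [(scale t v - w)^2 / 2] combines with it into [phi t v + w + w^2/2]. *)
Lemma tilted_integrand_change_var v :
  let x := exp (scale t * v + - w) in
  scale t * x * (exp (- th * x) * lognormal_pdf s x) = c_subst * kernel s t v.
Proof.
  intros x. destruct w_spec as [Hw Ew]. pose proof (pow_lt s 2 Hs).
  assert (Hx : th * x = w * exp (scale t * v) / s ^ 2).
  { assert (Hth' : th = w * exp w / s ^ 2) by (rewrite Ew; field; lra).
    assert (Hw1 : exp w * exp (- w) = 1) by (rewrite <- exp_plus, Rplus_opp_r; apply exp_0).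
    unfold x. rewrite exp_plus, Hth'.
    transitivity (w * exp (scale t * v) / s ^ 2 * (exp w * exp (- w))); [field; lra|].
    rewrite Hw1. ring. }
  unfold lognormal_pdf, c_subst, kernel. unfold x at 4. rewrite ln_exp.
  assert (0 < x) by apply exp_pos.
  replace (- th * x) with (- (w * exp (scale t * v) / s ^ 2)) by lra.
  transitivity (scale t / (s * sqrt (2 * PI)) * (exp (- (w * exp (scale t * v) / s ^ 2))
                * exp (- (scale t * v + - w) ^ 2 / (2 * s ^ 2)))).
  { fold x. field. repeat split; lra. }
  rewrite Rmult_assoc. f_equal. rewrite <- !exp_plus. f_equal.
  unfold phi, t, t_of. fold w. field. lra.
Qed.

Lemma is_RInt_gen_tilted (h : R -> R) (L : R) : (forall x, 0 < x -> continuous h x) ->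
  is_RInt_gen (fun v => h (exp (scale t * v + - w)) * kernel s t v) Fm Fp L ->
  is_RInt_gen (fun x => h x * (exp (- th * x) * lognormal_pdf s x)) (at_right 0) Fp (c_subst * L).
Proof.
  intros Hc HL. apply (is_RInt_gen_exp_change _ (scale t) (- w)).
  - apply scale_facts, t_ge_1.
  - intros x Hx. apply (continuous_mult h (fun x => exp (- th * x) * lognormal_pdf s x));
      [apply Hc, Hx|].
    apply continuous_of_ex_derive. unfold lognormal_pdf. auto_derive.
    pose proof (pow_lt s 2 Hs).
    repeat split; auto; try (apply Rgt_not_eq; repeat apply Rmult_lt_0_compat; auto);
      simpl in *; lra.
  - apply (is_RInt_gen_ext_everywhere _ _ (fun v => c_subst * (h (exp (scale t * v + - w))
      * kernel s t v))); [|apply (is_RInt_gen_scal (V := R_NormedModule)), HL].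
    intros v. pose proof (tilted_integrand_change_var v) as E. simpl in E.
    rewrite <- Rmult_assoc, (Rmult_comm c_subst), Rmult_assoc, <- E. ring.
Qed.

Hypothesis Ht : t_min s <= t.

Let A0_pos : 0 < A0 s t.
Proof. pose proof (A0_ge s t Hs Ht). pose proof (exp_pos (- 2 / s ^ 2)). lra. Qed.

Lemma exp_neg_kappa : exp (- kappa s th) = / (c_subst * A0 s t).
Proof.
  assert (Hlap : laplace s th = c_subst * A0 s t).
  { unfold laplace. apply int0inf_unique.
    apply (is_RInt_gen_ext_everywhere _ _ (fun x => 1 * (exp (- th * x) * lognormal_pdf s x)));
      [intros; ring|].
    apply is_RInt_gen_tilted; [intros; apply continuous_const|apply A0_correct; auto]. }
  unfold kappa. rewrite Hlap, exp_Ropp, exp_ln; [reflexivity|].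
  apply Rmult_lt_0_compat; assumption.
Qed.

Lemma tilted_mean_eq : tilted_mean s th = exp (- w) * mean_ratio s t.
Proof.
  unfold tilted_mean. apply int0inf_unique.
  apply (is_RInt_gen_ext_everywhere _ _
    (fun x => (x * exp (- kappa s th)) * (exp (- th * x) * lognormal_pdf s x))).
  { intros x. unfold tilted_pdf, Rminus. rewrite exp_plus. ring. }
  replace (exp (- w) * mean_ratio s t)
    with (c_subst * (exp (- w) * exp (- kappa s th) * A1 s t))
    by (unfold mean_ratio; rewrite exp_neg_kappa; field; lra).
  apply is_RInt_gen_tilted; [intros; apply continuous_of_ex_derive; auto_derive; auto|].
  apply (is_RInt_gen_ext_everywhere _ _
    (fun v => exp (- w) * exp (- kappa s th) * (exp (scale t * v) * kernel s t v)));
    [intros v; rewrite exp_plus; ring|].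
  apply (is_RInt_gen_scal (V := R_NormedModule)), A1_correct; auto.
Qed.

Lemma tilted_var_eq : tilted_var s th = exp (- w) ^ 2 * var_ratio s t.
Proof.
  unfold tilted_var. set (m := tilted_mean s th). apply int0inf_unique.
  apply (is_RInt_gen_ext_everywhere _ _
    (fun x => ((x - m) ^ 2 * exp (- kappa s th)) * (exp (- th * x) * lognormal_pdf s x))).
  { intros x. unfold tilted_pdf, Rminus. rewrite exp_plus. ring. }
  replace (exp (- w) ^ 2 * var_ratio s t)
    with (c_subst * (exp (- kappa s th) * (exp (- w) ^ 2 * A2 s t
            - 2 * m * exp (- w) * A1 s t + m ^ 2 * A0 s t))).
  2:{ unfold m, var_ratio. rewrite tilted_mean_eq, exp_neg_kappa. unfold mean_ratio.
      field. lra. }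
  apply is_RInt_gen_tilted; [intros; apply continuous_of_ex_derive; auto_derive; auto|].
  apply (is_RInt_gen_ext_everywhere _ _ (fun v => exp (- kappa s th) *
    (exp (- w) ^ 2 * (exp (2 * (scale t * v)) * kernel s t v)
     - 2 * m * exp (- w) * (exp (scale t * v) * kernel s t v) + m ^ 2 * (1 * kernel s t v)))).
  { intros v. rewrite exp_plus, exp_mult_two. ring. }
  apply (is_RInt_gen_scal (V := R_NormedModule)), (is_RInt_gen_plus (V := R_NormedModule)).
  - apply (is_RInt_gen_minus (V := R_NormedModule));
      apply (is_RInt_gen_scal (V := R_NormedModule)); [apply A2_correct|apply A1_correct]; auto.
  - apply (is_RInt_gen_scal (V := R_NormedModule)), A0_correct; auto.
Qed.

Lemma tilted_mean_normalized_eq :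
  tilted_mean s th / exp (mu_theta s th + sigma2_theta s th / 2)
  = mean_ratio s t / exp (s ^ 2 / t / 2).
Proof.
  change (mu_theta s th) with (- w). change (sigma2_theta s th) with (s ^ 2 / t).
  rewrite tilted_mean_eq, exp_plus. field. split; apply Rgt_not_eq, exp_pos.
Qed.

Lemma tilted_var_normalized_eq :
  tilted_var s th / (exp (2 * mu_theta s th + sigma2_theta s th)
                     * (exp (sigma2_theta s th) - 1))
  = var_ratio s t / (exp (s ^ 2 / t) * (exp (s ^ 2 / t) - 1)).
Proof.
  change (mu_theta s th) with (- w). change (sigma2_theta s th) with (s ^ 2 / t).
  destruct (t_min_facts s t Hs Ht) as [Ht2 _].
  assert (0 < s ^ 2 / t) by (apply Rdiv_lt_0_compat; [apply pow_lt|]; lra).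
  pose proof (exp_ineq1 (s ^ 2 / t) ltac:(lra)).
  rewrite tilted_var_eq, exp_plus, exp_mult_two. field.
  repeat split; try apply Rgt_not_eq, exp_pos; lra.
Qed.

End TiltedMoments.

Lemma t_of_large s M : 0 < s -> exists N, forall th, N < th -> 0 < th /\ M < t_of s th.
Proof.
  intros Hs. pose proof (pow_lt s 2 Hs). pose proof (exp_pos (2 * Rabs M)).
  exists (exp (2 * Rabs M) / s ^ 2). intros th Hth.
  assert (0 < exp (2 * Rabs M) / s ^ 2) by (apply Rdiv_lt_0_compat; auto).
  assert (Ha : exp (2 * Rabs M) < th * s ^ 2).
  { apply Rmult_lt_reg_r with (/ s ^ 2); [apply Rinv_0_lt_compat; auto|].
    rewrite Rmult_assoc, Rinv_r, Rmult_1_r by lra. exact Hth. }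
  split; [lra|].
  pose proof (ln_le_two_LambertW (th * s ^ 2) ltac:(nra)).
  assert (2 * Rabs M < ln (th * s ^ 2))
    by (rewrite <- (ln_exp (2 * Rabs M)); apply ln_increasing; auto).
  unfold t_of, w_of. pose proof (Rle_abs M). lra.
Qed.

Lemma is_lim_t_of s : 0 < s -> is_lim (t_of s) p_infty p_infty.
Proof.
  intros Hs P [M HM]. destruct (t_of_large s M Hs) as [N HN].
  exists N. intros th Hth. apply HM, HN, Hth.
Qed.

Lemma is_lim_comp_t_of s (g : R -> R) : 0 < s -> is_lim g p_infty 1 ->
  is_lim (fun th => g (t_of s th)) p_infty 1.
Proof.
  intros Hs Hg. apply (is_lim_comp g (t_of s) p_infty 1 p_infty Hg (is_lim_t_of s Hs)).
  exists 0. intros; discriminate.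
Qed.

Theorem corollary2p2 (sigma : R) (hsigma : 0 < sigma) :
  is_lim (fun theta => tilted_mean sigma theta /
            exp (mu_theta sigma theta + sigma2_theta sigma theta / 2))
         p_infty 1
  /\
  is_lim (fun theta => tilted_var sigma theta /
            (exp (2 * mu_theta sigma theta + sigma2_theta sigma theta)
             * (exp (sigma2_theta sigma theta) - 1)))
         p_infty 1.
Proof.
  destruct (t_of_large sigma (t_min sigma) hsigma) as [N HN].
  split.
  - apply (is_lim_ext_loc (fun th => mean_ratio sigma (t_of sigma th)
                                     / exp (sigma ^ 2 / t_of sigma th / 2))).
    + exists N. intros th Hth. destruct (HN th Hth).
      symmetry. apply tilted_mean_normalized_eq; auto; lra.
    + apply (is_lim_comp_t_of sigma (fun t => mean_ratio sigma t / exp (sigma ^ 2 / t / 2)));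
        [exact hsigma|apply is_lim_mean_ratio_normalized, hsigma].
  - apply (is_lim_ext_loc (fun th => var_ratio sigma (t_of sigma th)
      / (exp (sigma ^ 2 / t_of sigma th) * (exp (sigma ^ 2 / t_of sigma th) - 1)))).
    + exists N. intros th Hth. destruct (HN th Hth).
      symmetry. apply tilted_var_normalized_eq; auto; lra.
    + apply (is_lim_comp_t_of sigma
        (fun t => var_ratio sigma t / (exp (sigma ^ 2 / t) * (exp (sigma ^ 2 / t) - 1))));
        [exact hsigma|apply is_lim_var_ratio_normalized, hsigma].
Qed.
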